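(* Two tuples $(f_1,\dots,f_n),(g_1,\dots,g_n)\in M_{[0,1]}^n$ have the same type (over $\emptyset$) if and only if $\mathrm{im}(f_1,\dots,f_n)=\mathrm{im}(g_1,\dots,g_n)$.
   Context: $M_{[0,1]}$ is the set of continuous nondecreasing functions $f:[0,1]\to[0,1]$ with $f(0)=0$, $f(1)=1$, with the sup metric, regarded as a metric structure in the language of binary predicates $\varphi_\alpha$ ($\alpha\in\mathbb{Q}\cap[0,1]$), where $\varphi_\alpha(f,g)=f(t)$ for any $t$ with $f(t)+g(t)=\alpha$ (independent of the choice of $t$); this structure is interdefinable with Ben Yaacov's structure whose automorphism group is $\mathrm{Hom}^+([0,1])$, acting by $g\mapsto g\circ h^{-1}$. $\mathrm{im}(f_1,\dots,f_n)=\{(f_1(t),\dots,f_n(t)):t\in[0,1]\}\subseteq[0,1]^n$. *)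

From HB Require Import structures.
From mathcomp Require Import all_boot all_order all_algebra.
From mathcomp Require Import all_classical all_reals all_analysis.
From mathcomp Require Import Rstruct Rstruct_topology.
Set Implicit Arguments. Unset Strict Implicit. Unset Printing Implicit Defensive.
Import Order.TTheory GRing.Theory Num.Theory.
Local Open Scope classical_set_scope.
Local Open Scope ring_scope.

Notation RR := Rdefinitions.R.

(* An element of M_[0,1] is represented by a function RR -> RR; only its
   restriction to [0,1] matters (all notions below only look at [0,1]). *)
Definition inM (f : RR -> RR) : Prop :=
  [/\ {within `[0, 1], continuous f},
      {in `[0, 1] &, forall s t, s <= t -> f s <= f t},
      {in `[0, 1], forall t, 0 <= f t <= 1},
      f 0 = 0 & f 1 = 1].

Definition M01 : set (RR -> RR) := [set f | inM f].

Definition supdist (f g : RR -> RR) : RR :=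
  sup [set `|f t - g t| | t in `[0, 1]%classic].

(* phi_alpha(f,g) = f(t) for any t in [0,1] with f(t)+g(t) = alpha
   (the value does not depend on t, so the sup is that common value);
   alpha ranges over Q cap [0,1]. *)
Definition phi (a : rat) (f g : RR -> RR) : RR :=
  if (0 <= a) && (a <= 1) then
    sup [set f t | t in [set t | t \in `[0, 1] /\ f t + g t = ratr a]]
  else 0.

(* Formulas of continuous logic in the language {d} u {phi_alpha}:
   atomic formulas, continuous connectives of any finite arity, sup / inf. *)
Inductive formula : Type :=
  | FDist : nat -> nat -> formula
  | FPhi : rat -> nat -> nat -> formula
  | FConn : forall k : nat, ('rV[RR]_k -> RR) -> ('I_k -> formula) -> formula
  | FSup : nat -> formula -> formula
  | FInf : nat -> formula -> formula.

Fixpoint wf (p : formula) : Prop :=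
  match p with
  | FDist _ _ | FPhi _ _ _ => True
  | FConn k u args => continuous u /\ forall j, wf (args j)
  | FSup _ q | FInf _ q => wf q
  end.

Fixpoint free_in (x : nat) (p : formula) : Prop :=
  match p with
  | FDist i j | FPhi _ i j => x = i \/ x = j
  | FConn k u args => exists j, free_in x (args j)
  | FSup i q | FInf i q => x <> i /\ free_in x q
  end.

Definition upd (e : nat -> RR -> RR) (i : nat) (g : RR -> RR) :=
  fun x => if x == i then g else e x.

Fixpoint eval (e : nat -> RR -> RR) (p : formula) : RR :=
  match p with
  | FDist i j => supdist (e i) (e j)
  | FPhi a i j => phi a (e i) (e j)
  | FConn k u args => u (\row_j eval e (args j))
  | FSup i q => sup [set eval (upd e i g) q | g in M01]
  | FInf i q => inf [set eval (upd e i g) q | g in M01]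
  end.

(* environment given by an n-tuple (variables >= n get a dummy value,
   irrelevant for formulas with free variables among x_0..x_{n-1}) *)
Definition env (n : nat) (f : 'I_n -> RR -> RR) : nat -> RR -> RR :=
  fun x => odflt (fun t => t) (omap f (insub x)).

Definition same_type (n : nat) (f g : 'I_n -> RR -> RR) : Prop :=
  forall p : formula, wf p -> (forall x, free_in x p -> (x < n)%N) ->
    eval (env f) p = eval (env g) p.

Definition im (n : nat) (f : 'I_n -> RR -> RR) : set ('I_n -> RR) :=
  [set (fun i => f i t) | t in `[0, 1]%classic].

(* If im f = im g then, for every d > 0, matching the strictly increasing
   maps t |-> sum_i f_i t + d t and t |-> sum_i g_i t + d t (both from [0,1]
   onto [0, n + d]) gives an automorphism h of [0,1] with every f_i o h
   uniformly d-close to g_i.  Values of formulas are invariant under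
   automorphisms and uniformly continuous in the parameters, so f and g have
   the same type.
   Conversely, for rationals a_i close to f_i(t0), the formula
     inf_k [ sum_i |phi_1(x_i, k) - a_i| + sum_i (a_i - phi_{a_i}(x_i, k)) ]
   is small at x = f (take for k a steep ramp rising just before t0), hence
   also at x = g, and this forces a point of im g close to a.  As im g is
   compact, im f is contained in im g. *)

From Pilot Require Import Defs.
From mathcomp Require Import all_boot all_order all_algebra.
From mathcomp Require Import all_classical all_reals all_analysis.
From mathcomp Require Import Rstruct Rstruct_topology.
From mathcomp Require Import lra.
Import Order.TTheory GRing.Theory Num.Theory.
Set Implicit Arguments. Unset Strict Implicit. Unset Printing Implicit Defensive.
Local Open Scope classical_set_scope.
Local Open Scope ring_scope.
Local Notation I01 t := (0 <= t <= 1).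

Lemma itv01E (t : RR) : `[0, 1]%classic t = I01 t.
Proof. by rewrite /= in_itv. Qed.

Lemma I01_0 {R : numDomainType} : I01 (0 : R). Proof. by rewrite lexx ler01. Qed.
Lemma I01_1 {R : numDomainType} : I01 (1 : R). Proof. by rewrite lexx ler01. Qed.

Definition cont01 (f : RR -> RR) := forall x, I01 x -> forall e : RR, 0 < e ->
  exists2 d : RR, 0 < d & forall y, I01 y -> `|x - y| < d -> `|f x - f y| < e.

Lemma within_continuousP (f : RR -> RR) (A : set RR) :
  {within A, continuous f} <->
  (forall x, A x -> forall e : RR, 0 < e -> exists2 d : RR, 0 < d &
     forall y, A y -> `|x - y| < d -> `|f x - f y| < e).
Proof.
rewrite subspace_continuousP; split.
- move=> cf x Ax e e0.
  have := cf x Ax (ball (f x) e) (nbhsx_ballx _ _ e0).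
  rewrite /within /= => /nbhs_ballP [d d0 Hd].
  by exists d => // y Ay xy; apply: (Hd y).
- move=> cf x Ax P /nbhs_ballP [e e0 He].
  have [d d0 Hd] := cf x Ax e e0.
  rewrite /within /=; apply/nbhs_ballP; exists d => // y xy Ay.
  by apply: He; apply: Hd.
Qed.

Lemma cont01P (f : RR -> RR) : {within `[0, 1], continuous f} <-> cont01 f.
Proof.
rewrite within_continuousP; split => cf x Ix e e0.
- have [d d0 Hd] := cf x (Ix : `[0, 1]%classic x) e e0.
  by exists d => // y Iy; apply: Hd; rewrite itv01E.
- have [d d0 Hd] := cf x (Ix : I01 x) e e0.
  by exists d => // y Iy; apply: Hd; rewrite -itv01E.
Qed.

Lemma cont01_cst (a : RR) : cont01 (fun=> a).
Proof. by move=> x _ e e0; exists 1 => // y _ _; rewrite subrr normr0. Qed.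

Lemma cont01_add f g : cont01 f -> cont01 g -> cont01 (fun t => f t + g t).
Proof.
move=> cf cg x Ix e e0.
have e20 : 0 < e / 2 by rewrite divr_gt0.
have [d1 d10 H1] := cf x Ix _ e20.
have [d2 d20 H2] := cg x Ix _ e20.
exists (Num.min d1 d2); first by rewrite lt_min d10 d20.
move=> y Iy; rewrite lt_min => /andP[y1 y2].
have := H1 y Iy y1; have := H2 y Iy y2.
rewrite (_ : f x + g x - (f y + g y) = (f x - f y) + (g x - g y)); last by lra.
by move=> a b; apply: (le_lt_trans (ler_normD _ _)); lra.
Qed.

Lemma cont01_sum (I : finType) (f : I -> RR -> RR) : (forall i, cont01 (f i)) ->
  cont01 (fun t => \sum_i f i t).
Proof.
move=> cf; suff : forall s : seq I, cont01 (fun t => \sum_(i <- s) f i t) by apply.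
elim=> [|a s IH].
- by under eq_fun do rewrite big_nil; exact: cont01_cst.
- by under eq_fun do rewrite big_cons; exact: cont01_add.
Qed.

Lemma cont01_scale (c : RR) : cont01 (fun t => c * t).
Proof.
move=> x Ix e e0; have c1 : 0 < `|c| + 1 by rewrite ltr_wpDl.
exists (e / (`|c| + 1)); first by rewrite divr_gt0.
move=> y Iy; rewrite ltr_pdivlMr // -mulrBr normrM => xy.
by apply: le_lt_trans xy; rewrite mulrC ler_wpM2l //; lra.
Qed.

Lemma ivt01 (h : RR -> RR) a b v : cont01 h -> 0 <= a -> a <= b -> b <= 1 ->
  h a <= v <= h b -> exists2 t, a <= t <= b & h t = v.
Proof.
move=> ch a0 ab b1 hv.
have cw : {within `[a, b], continuous h}.
  apply/within_continuousP => x; rewrite /= in_itv /= => /andP[ax xb] e e0.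
  have [|d d0 Hd] := ch x _ e e0; first by apply/andP; split; lra.
  exists d => // y; rewrite /= in_itv /= => /andP[ay yb].
  by apply: Hd; apply/andP; split; lra.
have [|t tab ht] := @IVT _ h a b v ab cw.
  by case/andP: hv => h1 h2; rewrite ge_min h1 le_max h2 orbT.
by exists t => //; move: tab; rewrite in_itv.
Qed.

Record M01_spec (f : RR -> RR) : Prop := M01Spec {
  M01_cont : cont01 f;
  M01_mono : forall s t, I01 s -> I01 t -> s <= t -> f s <= f t;
  M01_range : forall t, I01 t -> 0 <= f t <= 1;
  M01_0 : f 0 = 0;
  M01_1 : f 1 = 1 }.

Lemma inMP f : inM f <-> M01_spec f.
Proof.
split.
- by case=> /cont01P c mo ra f0 f1; split => // s t Is It; apply: mo; rewrite in_itv.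
- by case=> /cont01P c mo ra f0 f1; split.
Qed.

Lemma inM_id : inM id.
Proof. by apply/inMP; split => // x _ e e0; exists e. Qed.

Lemma inM_comp g h : inM g -> inM h -> inM (g \o h).
Proof.
move=> /inMP [gc gm gr g0 g1] /inMP [hc hm hr h0 h1].
apply/inMP; split => /=; last 2 first.
- by rewrite h0 g0.
- by rewrite h1 g1.
- move=> x Ix e e0.
  have [d1 d10 Hd1] := gc (h x) (hr x Ix) e e0.
  have [d2 d20 Hd2] := hc x Ix d1 d10.
  by exists d2 => // y Iy xy; apply: Hd1; [exact: hr|exact: Hd2].
- by move=> s t Is It st; apply: gm; [exact: hr|exact: hr|exact: hm].
- by move=> t It; apply: gr; exact: hr.
Qed.

Lemma M01_nonempty : M01 !=set0.
Proof. by exists id; exact: inM_id. Qed.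

Lemma M01_sum_eq f g s t : M01_spec f -> M01_spec g -> I01 s -> I01 t ->
  f s + g s = f t + g t -> f s = f t.
Proof.
move=> Mf Mg Is It; wlog st : s t Is It / s <= t.
  move=> W; have [st|/ltW ts] := lerP s t; first exact: W.
  by move=> E; symmetry; apply: W.
by have := M01_mono Mf Is It st; have := M01_mono Mg Is It st; lra.
Qed.

Lemma phi_witness a f g : M01_spec f -> M01_spec g -> (0 <= a <= 1)%R ->
  exists2 t, I01 t & f t + g t = ratr a.
Proof.
move=> Mf Mg /andP[a0 a1].
have cfg := cont01_add (M01_cont Mf) (M01_cont Mg).
have [|t /andP[t0 t1] ft] := ivt01 (v := ratr a) cfg (lexx 0) ler01 (lexx 1).
  rewrite (M01_0 Mf) (M01_0 Mg) (M01_1 Mf) (M01_1 Mg) addr0 ler0q a0 /=.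
  have : ratr a <= ratr (1 : rat) :> RR by rewrite ler_rat.
  by rewrite rmorph1; lra.
by exists t; rewrite ?t0.
Qed.

Lemma phiE a f g t : M01_spec f -> M01_spec g -> (0 <= a <= 1)%R -> I01 t ->
  f t + g t = ratr a -> phi a f g = f t.
Proof.
move=> Mf Mg a01 It ft; rewrite /phi a01.
rewrite (_ : [set f s | s in _] = [set f t]) ?sup1 //.
apply/seteqP; split => [y [s [Is fs] <-]|y ->] /=.
- by apply: (M01_sum_eq Mf Mg Is It); rewrite fs ft.
- by exists t.
Qed.

Section SupPerturbation.
Variables (T : Type) (I : set T).
Hypothesis I0 : I !=set0.

Lemma sup_le_shift (F G : T -> RR) (eps : RR) :
  (exists B : RR, forall t, I t -> G t <= B) ->
  (forall t, I t -> F t <= G t + eps) ->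
  sup (F @` I) <= sup (G @` I) + eps.
Proof.
case: I0 => t0 It0 [B HB] FG.
have ubG : has_ubound (G @` I) by exists B => _ [t It <-]; exact: HB.
apply: ge_sup; first by exists (F t0), t0.
move=> _ [t It <-]; apply: (le_trans (FG t It)); rewrite lerD2r.
by apply: ub_le_sup => //; exists t.
Qed.

Lemma norm_sup_le (F : T -> RR) (B : RR) :
  (forall t, I t -> `|F t| <= B) -> `|sup (F @` I)| <= B.
Proof.
case: I0 => t0 It0 FB.
have ub : has_ubound (F @` I).
  by exists B => _ [t It <-]; apply: le_trans (FB t It); exact: ler_norm.
rewrite ler_norml; apply/andP; split.
- have := FB t0 It0; rewrite ler_norml => /andP[lo _].
  by apply: le_trans lo _; apply: ub_le_sup => //; exists t0.
- apply: ge_sup; first by exists (F t0), t0.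
  by move=> _ [t It <-]; have := FB t It; rewrite ler_norml => /andP[_].
Qed.

Lemma dist_sup_le (F G : T -> RR) (B eps : RR) :
  (forall t, I t -> `|F t| <= B) -> (forall t, I t -> `|G t| <= B) ->
  (forall t, I t -> `|F t - G t| <= eps) ->
  `|sup (F @` I) - sup (G @` I)| <= eps.
Proof.
move=> FB GB FG.
have bdd H : (forall t, I t -> `|H t| <= B) -> exists B, forall t, I t -> H t <= B.
  by move=> HB; exists B => t It; apply: le_trans (HB t It); exact: ler_norm.
have GF : sup (G @` I) <= sup (F @` I) + eps.
  apply: sup_le_shift; first exact: bdd.
  by move=> t It; have := FG t It; rewrite ler_norml; lra.
have FG' : sup (F @` I) <= sup (G @` I) + eps.
  apply: sup_le_shift; first exact: bdd.
  by move=> t It; have := FG t It; rewrite ler_norml; lra.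
by rewrite ler_norml; apply/andP; split; lra.
Qed.

Lemma norm_inf_le (F : T -> RR) (B : RR) :
  (forall t, I t -> `|F t| <= B) -> `|inf (F @` I)| <= B.
Proof.
move=> FB; rewrite /inf image_comp normrN; apply: norm_sup_le => t It.
by rewrite /= normrN; exact: FB.
Qed.

Lemma dist_inf_le (F G : T -> RR) (B eps : RR) :
  (forall t, I t -> `|F t| <= B) -> (forall t, I t -> `|G t| <= B) ->
  (forall t, I t -> `|F t - G t| <= eps) ->
  `|inf (F @` I) - inf (G @` I)| <= eps.
Proof.
move=> FB GB FG; rewrite /inf !image_comp -opprD normrN.
apply: (@dist_sup_le _ _ B) => t It /=; rewrite ?normrN; [exact: FB|exact: GB|].
by rewrite -opprD normrN; exact: FG.
Qed.

End SupPerturbation.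

Definition close01 (f f' : RR -> RR) (d : RR) := forall t, I01 t -> `|f t - f' t| <= d.

Lemma close01_ge0 f f' d : M01_spec f -> M01_spec f' -> close01 f f' d -> 0 <= d.
Proof.
by move=> Mf Mf' /(_ 0 I01_0); rewrite (M01_0 Mf) (M01_0 Mf') subrr normr0.
Qed.

Lemma itv01_nonempty : (`[0, 1]%classic : set RR) !=set0.
Proof. by exists 0; rewrite itv01E I01_0. Qed.

Lemma M01_dist_le1 f g t : M01_spec f -> M01_spec g -> I01 t -> `|f t - g t| <= 1.
Proof.
move=> Mf Mg It; have /andP[? ?] := M01_range Mf It.
by have /andP[? ?] := M01_range Mg It; rewrite ler_norml; apply/andP; split; lra.
Qed.

Lemma supdist_norm_le f g : M01_spec f -> M01_spec g -> `|supdist f g| <= 1.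
Proof.
move=> Mf Mg; apply: norm_sup_le; first exact: itv01_nonempty.
by move=> t; rewrite itv01E normr_id; exact: M01_dist_le1.
Qed.

Lemma supdist_dist_le f g f' g' d :
  M01_spec f -> M01_spec g -> M01_spec f' -> M01_spec g' ->
  close01 f f' d -> close01 g g' d -> `|supdist f g - supdist f' g'| <= d + d.
Proof.
move=> Mf Mg Mf' Mg' ff' gg'.
apply: (@dist_sup_le _ _ itv01_nonempty _ _ 1) => t; rewrite itv01E => It.
- by rewrite normr_id; exact: M01_dist_le1.
- by rewrite normr_id; exact: M01_dist_le1.
apply: le_trans (ler_dist_dist _ _) _.
rewrite (_ : f t - g t - (f' t - g' t) = (f t - f' t) - (g t - g' t)); last by lra.
by apply: le_trans (ler_normB _ _) _; apply: lerD; [exact: ff'|exact: gg'].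
Qed.

Lemma phi_norm_le a f g : M01_spec f -> M01_spec g -> `|phi a f g| <= 1.
Proof.
move=> Mf Mg; have [a01|a01] := boolP ((0 <= a) && (a <= 1))%R; last first.
  by rewrite /phi (negbTE a01) normr0.
have [t It ft] := phi_witness Mf Mg a01.
by rewrite (phiE Mf Mg a01 It ft); have /andP[? ?] := M01_range Mf It; rewrite ger0_norm.
Qed.

Lemma phi_sub_le a f g f' g' d :
  M01_spec f -> M01_spec g -> M01_spec f' -> M01_spec g' ->
  close01 f f' d -> close01 g g' d -> phi a f g - phi a f' g' <= d + d + d.
Proof.
move=> Mf Mg Mf' Mg' ff' gg'; have d0 := close01_ge0 Mf Mf' ff'.
have [a01|a01] := boolP ((0 <= a) && (a <= 1))%R; last first.
  by rewrite /phi (negbTE a01) subrr; lra.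
have [t It ft] := phi_witness Mf Mg a01.
have [t' It' ft'] := phi_witness Mf' Mg' a01.
rewrite (phiE Mf Mg a01 It ft) (phiE Mf' Mg' a01 It' ft').
have := ff' t' It'; have := gg' t' It'; have := ff' t It.
rewrite !ler_norml => /andP[? ?] /andP[? ?] /andP[? ?].
have [tt'|/ltW t't] := lerP t t'.
- by have := M01_mono Mf It It' tt'; lra.
- by have := M01_mono Mf It' It t't; have := M01_mono Mg It' It t't; lra.
Qed.

Lemma phi_dist_le a f g f' g' d :
  M01_spec f -> M01_spec g -> M01_spec f' -> M01_spec g' ->
  close01 f f' d -> close01 g g' d -> `|phi a f g - phi a f' g'| <= d + d + d.
Proof.
move=> Mf Mg Mf' Mg' ff' gg'; rewrite ler_norml; apply/andP; split.
- rewrite lerNl opprB; apply: phi_sub_le => // t It; rewrite distrC; [exact: ff'|exact: gg'].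
- exact: phi_sub_le.
Qed.

Lemma compact_unif_cont (T : pseudoMetricType RR) (u : T -> RR) (K : set T) :
  continuous u -> compact K -> forall eps : RR, 0 < eps ->
  exists2 d : RR, 0 < d & forall v w, K v -> ball v d w -> `|u v - u w| < eps.
Proof.
move=> cu cK eps e0; have e20 : 0 < eps / 2 by rewrite divr_gt0.
pose P d v := forall w, ball v d w -> `|u v - u w| < eps.
have near_P x : K x -> \forall x' \near x & d \near (0 : RR)^'+, P d x'.
  move=> _; have /nbhs_ballP[r r0 Hr] := cu x _ (nbhsx_ballx (u x) _ e20).
  have r20 : 0 < r / 2 by rewrite divr_gt0.
  exists (ball x (r / 2), [set d : RR | 0 < d < r / 2]).
    split; first exact: nbhsx_ballx.
    by near=> d; apply/andP; split; near: d; [exact: nbhs_right_gt|exact: nbhs_right_lt].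
  move=> [x' d] [/= xx' /andP[d0 dr]] w x'w.
  have xw : ball x r w.
    by rewrite (splitr r); apply: ball_triangle xx' (le_ball _ x'w); lra.
  have xx'r : ball x r x' by apply: le_ball xx'; lra.
  have := Hr _ xw; have := Hr _ xx'r; rewrite /ball /= => a b.
  rewrite (_ : u x' - u w = (u x - u w) - (u x - u x')); last by lra.
  by apply: (le_lt_trans (ler_normB _ _)); lra.
have : \forall d \near (0 : RR)^'+, K `<=` P d.
  by apply: (compact_near_coveringP K).1 cK RR ((0 : RR)^'+) P _ near_P.
move=> /(filterI (nbhs_right_gt 0)) /filter_ex[d [d0 Hd]].
by exists d => // v w Kv; apply: Hd.
Unshelve. all: by end_near.
Qed.

Lemma compact_norm_bounded (T : topologicalType) (u : T -> RR) (K : set T) :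
  continuous u -> compact K -> exists M : RR, forall v, K v -> `|u v| <= M.
Proof.
move=> cu cK; have cuK : compact (u @` K).
  by apply: continuous_compact => //; exact: continuous_subspaceT.
have [M [_ HM]] := @compact_bounded _ RR^o (u @` K) cuK.
by exists (M + 1) => v Kv; apply: (HM (M + 1)); [lra|exists v].
Qed.

Lemma row_ballP k (x y : 'rV[RR]_k) r :
  ball x r y <-> 0 < r /\ forall j, `|x ord0 j - y ord0 j| < r.
Proof.
split=> -[r0 xy]; split => //.
- by move=> j; exact: xy ord0 j.
- by move=> i j; rewrite (ord1 i); exact: xy.
Qed.

Definition box k (B : RR) : set 'rV[RR]_k :=
  [set v | forall j, `[- B, B]%classic (v ord0 j)].
Arguments box : clear implicits.

Lemma box_compact k (B : RR) : compact (box k B).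
Proof.
by apply: (@rV_compact _ _ (fun=> `[- B, B]%classic)) => _; exact: segment_compact.
Qed.

Lemma row_box k (F : 'I_k -> RR) (B : RR) : (forall j, `|F j| <= B) ->
  box k B (\row_j F j).
Proof. by move=> FB j; rewrite mxE /= in_itv /= -ler_norml. Qed.

Lemma finite_common_delta (T : finType) (P : T -> RR -> Prop) :
  (forall j d d', 0 < d' -> d' <= d -> P j d -> P j d') ->
  (forall j, exists2 d, 0 < d & P j d) -> exists2 d, 0 < d & forall j, P j d.
Proof.
move=> mono ex; suff : forall s : seq T, exists2 d, 0 < d & forall j, j \in s -> P j d.
  by case/(_ (enum T)) => d d0 Hd; exists d => // j; apply: Hd; rewrite mem_enum.
elim=> [|a s [d d0 Hd]]; first by exists 1.
have [da da0 Hda] := ex a; have md0 : 0 < Num.min d da by rewrite lt_min d0 da0.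
exists (Num.min d da) => // j; rewrite inE => /orP[/eqP->|js].
- by apply: mono Hda; rewrite // ge_min lexx orbT.
- by apply: mono (Hd j js); rewrite // ge_min lexx.
Qed.

(* Plain [eval] would denote the evaluation map of the topology library. *)
Local Notation eval := Defs.eval.

Definition admissible (e : nat -> RR -> RR) p := forall x, free_in x p -> M01_spec (e x).

Definition env_close (e e' : nat -> RR -> RR) p d :=
  forall x, free_in x p -> close01 (e x) (e' x) d.

Lemma admissible_arg e k u (args : 'I_k -> formula) j :
  admissible e (FConn u args) -> admissible e (args j).
Proof. by move=> ok x fx; apply: ok; exists j. Qed.

Lemma env_close_arg e e' k u (args : 'I_k -> formula) j d :
  env_close e e' (FConn u args) d -> env_close e e' (args j) d.
Proof. by move=> cl x fx; apply: cl; exists j. Qed.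

Lemma admissible_upd e i q g : (forall x, x <> i /\ free_in x q -> M01_spec (e x)) ->
  M01_spec g -> admissible (upd e i g) q.
Proof. by move=> ok Mg x fx; rewrite /upd; case: eqP => // xi; exact: ok. Qed.

Lemma env_close_upd e e' i q g d :
  (forall x, x <> i /\ free_in x q -> close01 (e x) (e' x) d) -> 0 <= d ->
  env_close (upd e i g) (upd e' i g) q d.
Proof.
move=> cl d0 x fx t It; rewrite /upd; case: eqP => [_|xi]; last exact: cl.
by rewrite subrr normr0.
Qed.

Lemma env_close_le e e' p d d' : d' <= d -> env_close e e' p d' -> env_close e e' p d.
Proof. by move=> dd cl x fx t It; apply: le_trans (cl x fx t It) dd. Qed.

Lemma eval_args_box e k (args : 'I_k -> formula) (B : 'I_k -> RR) :
  (forall j, `|eval e (args j)| <= B j) ->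
  box k (\sum_j `|B j|) (\row_j eval e (args j)).
Proof.
move=> HB; apply: row_box => j; apply: le_trans (HB j) _.
apply: le_trans (ler_norm _) _; rewrite (bigD1 j) //= lerDl.
by apply: sumr_ge0 => i _.
Qed.

Lemma eval_bounded p : wf p -> exists B : RR, forall e, admissible e p -> `|eval e p| <= B.
Proof.
elim: p => [i j|a i j|k u args IH|i q IH|i q IH] /=.
- by move=> _; exists 1 => e ok; apply: supdist_norm_le; apply: ok => /=; auto.
- by move=> _; exists 1 => e ok; apply: phi_norm_le; apply: ok => /=; auto.
- move=> [cu wa]; have [B HB] := fin_all_exists (fun j => IH j (wa j)).
  have [M HM] := compact_norm_bounded cu (@box_compact k (\sum_j `|B j|)).
  exists M => e ok; apply/HM/eval_args_box => j.
  by apply: HB; exact: admissible_arg ok.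
- move=> /IH[B HB]; exists B => e ok.
  apply: norm_sup_le; first exact: M01_nonempty.
  by move=> g /inMP Mg; apply/HB/admissible_upd.
- move=> /IH[B HB]; exists B => e ok.
  apply: norm_inf_le; first exact: M01_nonempty.
  by move=> g /inMP Mg; apply/HB/admissible_upd.
Qed.

Definition eval_unif_cont p := forall eps : RR, 0 < eps -> exists2 d : RR, 0 < d &
  forall e e', admissible e p -> admissible e' p -> env_close e e' p d ->
    `|eval e p - eval e' p| <= eps.

Lemma eval_unif_cont_dist i j : eval_unif_cont (FDist i j).
Proof.
move=> eps e0; exists (eps / 2); first by rewrite divr_gt0.
move=> e e' ok ok' cl; rewrite [leRHS]splitr.
by apply: supdist_dist_le; [apply: ok|apply: ok|apply: ok'|apply: ok'|apply: cl|apply: cl];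
  rewrite /=; auto.
Qed.

Lemma eval_unif_cont_phi a i j : eval_unif_cont (FPhi a i j).
Proof.
move=> eps e0; exists (eps / 3); first by rewrite divr_gt0.
move=> e e' ok ok' cl; have -> : eps = eps / 3 + eps / 3 + eps / 3 by lra.
by apply: phi_dist_le; [apply: ok|apply: ok|apply: ok'|apply: ok'|apply: cl|apply: cl];
  rewrite /=; auto.
Qed.

Lemma eval_unif_cont_conn k u (args : 'I_k -> formula) :
  continuous u -> (forall j, wf (args j)) -> (forall j, eval_unif_cont (args j)) ->
  eval_unif_cont (FConn u args).
Proof.
move=> cu wa IH eps e0; have [B HB] := fin_all_exists (fun j => eval_bounded (wa j)).
have [eta eta0 Heta] := compact_unif_cont cu (@box_compact k (\sum_j `|B j|)) e0.
have eta20 : 0 < eta / 2 by rewrite divr_gt0.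
have [d d0 Hd] := @finite_common_delta _ (fun j d => forall e e',
    admissible e (args j) -> admissible e' (args j) -> env_close e e' (args j) d ->
    `|eval e (args j) - eval e' (args j)| <= eta / 2)
  (fun j d d' _ dd H e e' ok ok' cl => H e e' ok ok' (env_close_le dd cl))
  (fun j => IH j _ eta20).
exists d => // e e' ok ok' cl; apply/ltW/Heta.
  by apply: eval_args_box => j; apply: HB; exact: admissible_arg ok.
apply/row_ballP; split => // j; rewrite !mxE.
apply: le_lt_trans (Hd j e e' _ _ _) _; last by lra.
- exact: admissible_arg ok.
- exact: admissible_arg ok'.
- exact: env_close_arg cl.
Qed.

Lemma eval_unif_cont_sup i q : wf q -> eval_unif_cont q -> eval_unif_cont (FSup i q).
Proof.
move=> wq IH eps e0; have [d d0 Hd] := IH eps e0; have [B HB] := eval_bounded wq.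
exists d => // e e' ok ok' cl.
apply: (@dist_sup_le _ _ M01_nonempty _ _ B) => g /inMP Mg.
- by apply/HB/admissible_upd.
- by apply/HB/admissible_upd.
- by apply: Hd; [exact: admissible_upd|exact: admissible_upd|exact/env_close_upd/ltW].
Qed.

Lemma eval_unif_cont_inf i q : wf q -> eval_unif_cont q -> eval_unif_cont (FInf i q).
Proof.
move=> wq IH eps e0; have [d d0 Hd] := IH eps e0; have [B HB] := eval_bounded wq.
exists d => // e e' ok ok' cl.
apply: (@dist_inf_le _ _ M01_nonempty _ _ B) => g /inMP Mg.
- by apply/HB/admissible_upd.
- by apply/HB/admissible_upd.
- by apply: Hd; [exact: admissible_upd|exact: admissible_upd|exact/env_close_upd/ltW].
Qed.

Lemma wf_eval_unif_cont p : wf p -> eval_unif_cont p.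
Proof.
elim: p => [i j|a i j|k u args IH|i q IH|i q IH] /=.
- by move=> _; exact: eval_unif_cont_dist.
- by move=> _; exact: eval_unif_cont_phi.
- by move=> [cu wa]; apply: eval_unif_cont_conn => // j; exact: IH.
- by move=> wq; apply: eval_unif_cont_sup => //; exact: IH.
- by move=> wq; apply: eval_unif_cont_inf => //; exact: IH.
Qed.

Section Reparametrization.
Variables h h' : RR -> RR.
Hypotheses (hK : cancel h h') (h'K : cancel h' h) (Mh : inM h) (Mh' : inM h').

Lemma image_reparamI (T : Type) (F : RR -> T) (A : set RR) :
  [set F (h t) | t in `[0, 1] `&` h @^-1` A] = [set F t | t in `[0, 1] `&` A].
Proof.
have /inMP[_ _ hr _ _] := Mh; have /inMP[_ _ h'r _ _] := Mh'.
apply/seteqP; split => _ [t [It At] <-].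
- by exists (h t) => //; split => //; exact: hr.
- by exists (h' t); rewrite /= ?h'K //; split => //; exact: h'r.
Qed.

Lemma image_reparam (T : Type) (F : RR -> T) :
  [set F (h t) | t in `[0, 1]] = [set F t | t in `[0, 1]].
Proof. by have := image_reparamI F setT; rewrite preimage_setT !setIT. Qed.

Lemma image_eval_upd_reparam i q e :
  (forall e, eval (fun x => e x \o h) q = eval e q) ->
  [set eval (upd (fun x => e x \o h) i g) q | g in M01] =
  [set eval (upd e i g) q | g in M01].
Proof.
move=> IH; apply/seteqP; split => _ [g Mg <-].
- exists (g \o h'); first exact: inM_comp.
  rewrite -IH; congr eval; apply/funext => x; rewrite /upd.
  by case: eqP => // _; apply/funext => t /=; rewrite hK.
- exists (g \o h); first exact: inM_comp.
  by rewrite -[RHS]IH; congr eval; apply/funext => x; rewrite /upd; case: eqP.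
Qed.

Lemma eval_reparam p e : eval (fun x => e x \o h) p = eval e p.
Proof.
elim: p e => [i j|a i j|k u args IH|i q IH|i q IH] e /=.
- by rewrite /supdist (image_reparam (fun s => `|e i s - e j s|)).
- rewrite /phi; case: ifP => // _; congr sup.
  exact: (image_reparamI (e i) [set t | e i t + e j t = ratr a]).
- by congr u; apply/rowP => j; rewrite !mxE IH.
- by rewrite image_eval_upd_reparam.
- by rewrite image_eval_upd_reparam.
Qed.

End Reparametrization.

Record incr_homeo (A : RR -> RR) (c : RR) : Prop := IncrHomeo {
  incr_homeo_cont : cont01 A;
  incr_homeo_lt : forall s t, I01 s -> I01 t -> s < t -> A s < A t;
  incr_homeo_0 : A 0 = 0;
  incr_homeo_1 : A 1 = c }.

Section MatchParam.
Variable c : RR.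

Lemma incr_homeo_le A s t : incr_homeo A c -> I01 s -> I01 t -> (A s <= A t) = (s <= t).
Proof.
move=> hA Is It; have [st|ts] := lerP s t.
- have [->|st'] := eqVneq s t; first by rewrite lexx.
  by apply/ltW/(incr_homeo_lt hA) => //; rewrite lt_neqAle st' st.
- by apply/negbTE; rewrite -ltNge; apply: (incr_homeo_lt hA).
Qed.

Lemma incr_homeo_inj A s t : incr_homeo A c -> I01 s -> I01 t -> A s = A t -> s = t.
Proof.
move=> hA Is It E; apply/le_anti/andP; split.
- by rewrite -(incr_homeo_le hA Is It) E.
- by rewrite -(incr_homeo_le hA It Is) E.
Qed.

(* Outside [0,1] the identity, so that [match_param A B] is a bijection of RR. *)
Definition match_param (A B : RR -> RR) (t : RR) : RR :=
  if I01 t then xget 0 (fun s => I01 s /\ A s = B t) else t.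

Lemma match_paramP A B t : incr_homeo A c -> incr_homeo B c -> I01 t ->
  I01 (match_param A B t) /\ A (match_param A B t) = B t.
Proof.
move=> hA hB It; rewrite /match_param It.
suff ex : exists s, I01 s /\ A s = B t by exact: (xgetPex 0 ex).
have [|s Is As] := ivt01 (v := B t) (incr_homeo_cont hA) (lexx 0) ler01 (lexx 1).
  have /andP[t0 t1] := It.
  rewrite (incr_homeo_0 hA) (incr_homeo_1 hA) -(incr_homeo_0 hB) -(incr_homeo_1 hB).
  by rewrite !(incr_homeo_le hB) ?I01_0 ?I01_1 ?t0.
by exists s.
Qed.

Lemma match_paramK A B : incr_homeo A c -> incr_homeo B c ->
  cancel (match_param A B) (match_param B A).
Proof.
move=> hA hB t; have [It|It] := boolP (I01 t); last first.
  by rewrite /match_param (negbTE It) (negbTE It).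
have [Is ABs] := match_paramP hA hB It; have [Iu BAu] := match_paramP hB hA Is.
by apply: (incr_homeo_inj hB Iu It); rewrite BAu ABs.
Qed.

Lemma match_param_inM A B : incr_homeo A c -> incr_homeo B c -> inM (match_param A B).
Proof.
move=> hA hB.
have ex t : I01 t -> _ := match_paramP hA hB (t := t).
have mp0 : match_param A B 0 = 0.
  have [I E] := ex 0 I01_0; apply: (incr_homeo_inj hA I I01_0).
  by rewrite E (incr_homeo_0 hA) (incr_homeo_0 hB).
have mp1 : match_param A B 1 = 1.
  have [I E] := ex 1 I01_1; apply: (incr_homeo_inj hA I I01_1).
  by rewrite E (incr_homeo_1 hA) (incr_homeo_1 hB).
have mono s t : I01 s -> I01 t -> (match_param A B s <= match_param A B t) = (s <= t).
  move=> Is It; have [I1 E1] := ex s Is; have [I2 E2] := ex t It.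
  by rewrite -(incr_homeo_le hA I1 I2) E1 E2 (incr_homeo_le hB Is It).
split => //; last by move=> t It; case: (ex t It).
- rewrite (_ : `[0, 1] = `[match_param A B 0, match_param A B 1]); last by rewrite mp0 mp1.
  apply: segment_inc_surj_continuous.
  + by move=> s t; rewrite !mp0 !mp1 => Is It; apply: mono.
  + rewrite !mp0 !mp1 => y /= Iy; exists (match_param B A y); first by case: (match_paramP hB hA Iy).
    exact: (match_paramK hB hA).
- by move=> s t Is It st; rewrite mono.
Qed.

End MatchParam.

Lemma M01_dist_le_sum (I : finType) (h : I -> RR -> RR) i s t :
  (forall i, M01_spec (h i)) -> I01 s -> I01 t ->
  `|h i s - h i t| <= `|\sum_j h j s - \sum_j h j t|.
Proof.
move=> Mh; wlog st : s t / s <= t => [W Is It|Is It].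
  have [st|/ltW ts] := lerP s t; first exact: W.
  by rewrite distrC [X in _ <= X]distrC; exact: W.
have mono j : 0 <= h j t - h j s by rewrite subr_ge0; exact: (M01_mono (Mh j)).
rewrite distrC [X in _ <= X]distrC !ger0_norm -?sumrB ?sumr_ge0 //.
by rewrite (bigD1 i) //= lerDl sumr_ge0.
Qed.

Definition tilted_sum n (h : 'I_n -> RR -> RR) (d t : RR) := \sum_i h i t + d * t.

Lemma tilted_sum_homeo n (h : 'I_n -> RR -> RR) d : (forall i, M01_spec (h i)) -> 0 < d ->
  incr_homeo (tilted_sum h d) (n%:R + d).
Proof.
move=> Mh d0; split; rewrite /tilted_sum.
- apply: cont01_add; last exact: cont01_scale.
  by apply: cont01_sum => i; exact: M01_cont.
- move=> s t Is It st; apply: ler_ltD; last by rewrite ltr_pM2l.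
  by apply: ler_sum => i _; apply: (M01_mono (Mh i)) => //; exact: ltW.
- by rewrite mulr0 addr0; apply: big1 => i _; exact: M01_0.
- rewrite mulr1 (eq_bigr (fun=> 1)); last by move=> i _; exact: M01_1.
  by rewrite sumr_const card_ord.
Qed.

Lemma same_image_approx_reparam n (f g : 'I_n -> RR -> RR) d :
  (forall i, M01_spec (f i)) -> (forall i, M01_spec (g i)) -> im f = im g -> 0 < d ->
  exists h h', [/\ cancel h h', cancel h' h, inM h, inM h' &
    forall i, close01 (f i \o h) (g i) d].
Proof.
move=> Mf Mg Eim d0.
have hF := tilted_sum_homeo Mf d0; have hG := tilted_sum_homeo Mg d0.
exists (match_param (tilted_sum f d) (tilted_sum g d)).
exists (match_param (tilted_sum g d) (tilted_sum f d)).
split; [exact: match_paramK hF hG|exact: match_paramK hG hF|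
  exact: match_param_inM hF hG|exact: match_param_inM hG hF|].
move=> i t It /=; set s := match_param _ _ t.
have [Is Fs] : I01 s /\ tilted_sum f d s = tilted_sum g d t by exact: match_paramP hF hG It.
(* g t = f t' for some t', and the tilted sums of f at s and t' differ by d (t - s). *)
have [t' It' gt] : im f (fun i => g i t) by rewrite Eim; exists t; rewrite ?itv01E.
rewrite itv01E in It'; have gf j : g j t = f j t' by rewrite -(congr1 (@^~ j) gt).
rewrite /= gf; apply: le_trans (M01_dist_le_sum i Mf Is It') _.
have -> : \sum_j f j s - \sum_j f j t' = d * (t - s).
  move: Fs; rewrite /tilted_sum (eq_bigr _ (fun j _ => gf j)); lra.
rewrite normrM gtr0_norm // -[leRHS]mulr1 ler_pM2l // ler_norml.
by move: Is It => /andP[? ?] /andP[? ?]; apply/andP; split; lra.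
Qed.

Lemma env_ord n (f : 'I_n -> RR -> RR) (i : 'I_n) : env f i = f i.
Proof. by rewrite /env valK. Qed.

Lemma same_image_same_type n (f g : 'I_n -> RR -> RR) :
  (forall i, inM (f i)) -> (forall i, inM (g i)) -> im f = im g -> same_type f g.
Proof.
move=> Mf Mg Eim p wp fv; apply/eqP; rewrite -subr_eq0 -normr_le0.
apply/ler_addgt0Pr => eps e0; rewrite add0r.
have [d d0 Hd] := wf_eval_unif_cont wp e0.
have Mf' i : M01_spec (f i) by apply/inMP.
have Mg' i : M01_spec (g i) by apply/inMP.
have [h [h' [hK h'K Mh Mh' fhg]]] := same_image_approx_reparam Mf' Mg' Eim d0.
rewrite -(eval_reparam hK h'K Mh Mh'); apply: Hd => x /fv xn;
  rewrite -[x]/(val (Ordinal xn)) !env_ord.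
- by apply/inMP/inM_comp.
- exact/inMP.
- exact: fhg.
Qed.

Section ApproxPointFormula.
Variables (n : nat) (a : 'I_n -> rat).

(* The bound variable [n] plays the role of k, the free variables [0 .. n-1]
   that of x. *)
Definition approx_point_args (j : 'I_(n + n)) : formula :=
  match fintype.split j with inl i => FPhi 1 i n | inr i => FPhi (a i) i n end.

Definition approx_point_conn (v : 'rV[RR]_(n + n)) : RR :=
  \sum_j match fintype.split j with
         | inl i => `|v ord0 j - ratr (a i)|
         | inr i => ratr (a i) - v ord0 j end.

Definition approx_point_formula : formula :=
  FInf n (FConn approx_point_conn approx_point_args).

Definition approx_point_cost (g : 'I_n -> RR -> RR) (k : RR -> RR) : RR :=
  \sum_i `|phi 1 (g i) k - ratr (a i)| + \sum_i (ratr (a i) - phi (a i) (g i) k).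

Lemma approx_point_formula_wf : wf approx_point_formula.
Proof.
split=> [|j]; last by rewrite /approx_point_args; case: fintype.split.
apply: continuous_big => [|j _]; first exact: (@add_continuous RR^o).
move=> v; case: fintype.split => i.
- have cB : {for v, continuous (fun v : 'rV[RR]_(n + n) => v ord0 j - ratr (a i))}.
    by apply: (@continuousB _ RR^o); [exact: coord_continuous|exact: cst_continuous].
  exact: (continuous_comp cB (@norm_continuous _ RR^o _)).
- have cB : {for v, continuous (fun v : 'rV[RR]_(n + n) => ratr (a i) - v ord0 j)}.
    by apply: (@continuousB _ RR^o); [exact: cst_continuous|exact: coord_continuous].
  exact: cB.
Qed.

Lemma approx_point_formula_free x : free_in x approx_point_formula -> (x < n)%N.
Proof.
case=> xn [j]; rewrite /approx_point_args.
by case: fintype.split => i [->|//]; exact: ltn_ord.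
Qed.

Lemma eval_approx_point_formula (g : 'I_n -> RR -> RR) :
  eval (env g) approx_point_formula = inf [set approx_point_cost g k | k in M01].
Proof.
have updE k (i : 'I_n) : upd (env g) n k i = g i.
  by rewrite /upd ifN_eq ?env_ord // neq_ltn ltn_ord.
have updnE k : upd (env g) n k n = k by rewrite /upd eqxx.
congr (inf (_ @` _)); apply/funext => k /=.
rewrite /approx_point_conn big_split_ord /approx_point_cost.
by congr (_ + _); apply: eq_bigr => i _;
  rewrite mxE /approx_point_args ?(unsplitK (inl _)) ?(unsplitK (inr _)) /= updE updnE.
Qed.

End ApproxPointFormula.

Definition clamp01 (x : RR) : RR := if x <= 0 then 0 else if x <= 1 then x else 1.

Lemma clamp01_cases x : [\/ x <= 0 /\ clamp01 x = 0, (0 <= x <= 1) /\ clamp01 x = x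
  | 1 <= x /\ clamp01 x = 1].
Proof.
rewrite /clamp01; have [x0|x0] := lerP x 0; first by apply: Or31.
have [x1|x1] := lerP x 1; first by apply: Or32; rewrite (ltW x0).
by apply: Or33; split => //; exact: ltW.
Qed.

Lemma clamp01_lip x y : `|clamp01 x - clamp01 y| <= `|x - y|.
Proof.
have := ler_norm (x - y); have := ler_norm (y - x); rewrite distrC.
have [[? ->]|[/andP[? ?] ->]|[? ->]] := clamp01_cases x;
have [[? ->]|[/andP[? ?] ->]|[? ->]] := clamp01_cases y;
  by move=> ? ?; rewrite ler_norml; apply/andP; split; lra.
Qed.

Lemma clamp01_mono x y : x <= y -> clamp01 x <= clamp01 y.
Proof.
have [[? ->]|[/andP[? ?] ->]|[? ->]] := clamp01_cases x;
have [[? ->]|[/andP[? ?] ->]|[? ->]] := clamp01_cases y; lra.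
Qed.

Lemma clamp01_range x : 0 <= clamp01 x <= 1.
Proof.
by have [[? ->]|[/andP[? ?] ->]|[? ->]] := clamp01_cases x; apply/andP; split; lra.
Qed.

Lemma clamp01_le0 x : x <= 0 -> clamp01 x = 0.
Proof. by rewrite /clamp01 => ->. Qed.

Lemma clamp01_ge1 x : 1 <= x -> clamp01 x = 1.
Proof. by have [[? ->]|[/andP[? ?] ->]|[? ->]] := clamp01_cases x => // ?; lra. Qed.

Definition ramp (c w t : RR) := clamp01 ((t - c) / w).

Lemma ramp_M01 c w : 0 <= c -> 0 < w -> c + w <= 1 -> M01_spec (ramp c w).
Proof.
move=> c0 w0 cw1; have wV0 : 0 < w^-1 by rewrite invr_gt0.
split; rewrite /ramp.
- move=> x Ix e e0; exists (e * w); first by rewrite mulr_gt0.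
  move=> y Iy xy; apply: le_lt_trans (clamp01_lip _ _) _.
  rewrite -mulrBl (_ : x - c - (y - c) = x - y); last by lra.
  by rewrite normrM (gtr0_norm wV0) ltr_pdivrMr.
- by move=> s t _ _ st; apply/clamp01_mono/ler_wpM2r; [exact: ltW|lra].
- by move=> t _; exact: clamp01_range.
- by apply: clamp01_le0; rewrite sub0r mulNr oppr_le0 divr_ge0 // ltW.
- by apply: clamp01_ge1; rewrite ler_pdivlMr //; lra.
Qed.

Lemma ramp_le c w s : 0 < w -> s <= c -> ramp c w s = 0.
Proof. by move=> w0 sc; apply: clamp01_le0; rewrite pmulr_lle0 ?invr_gt0 // subr_le0. Qed.

Lemma ramp_end c w : 0 < w -> ramp c w (c + w) = 1.
Proof. by move=> w0; rewrite /ramp addrAC subrr add0r divff ?gt_eqF // clamp01_ge1. Qed.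

Lemma phi1_ramp f k c c' : M01_spec f -> M01_spec k -> 0 <= c -> c <= c' -> c' <= 1 ->
  k c = 0 -> k c' = 1 -> exists2 t, c <= t <= c' & phi 1 f k = f t.
Proof.
move=> Mf Mk c0 cc' c'1 kc kc'.
have cfk := cont01_add (M01_cont Mf) (M01_cont Mk).
have [|t /andP[ct tc'] ft] := ivt01 (v := 1) cfk c0 cc' c'1.
  have /andP[? ?] : 0 <= f c <= 1 by apply: M01_range => //; apply/andP; split; lra.
  have /andP[? ?] : 0 <= f c' <= 1 by apply: M01_range => //; apply/andP; split; lra.
  by rewrite kc kc'; apply/andP; split; lra.
exists t; rewrite ?ct //; apply: phiE => //; last by rewrite rmorph1.
by apply/andP; split; lra.
Qed.

Lemma phi_gap_le a f k c : M01_spec f -> M01_spec k -> (0 <= a <= 1)%R -> I01 c ->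
  (forall s, I01 s -> s <= c -> k s = 0) -> ratr a - phi a f k <= Num.max 0 (ratr a - f c).
Proof.
move=> Mf Mk a01 Ic k0; have [s Is fs] := phi_witness Mf Mk a01.
rewrite (phiE Mf Mk a01 Is fs) -fs le_max; apply/orP.
have [sc|/ltW cs] := lerP s c; first by left; rewrite k0 //; lra.
by right; have := M01_mono Mf Ic Is cs; lra.
Qed.

Lemma approx_point_cost_le n (f : 'I_n -> RR -> RR) (a : 'I_n -> rat) t0 eta :
  (forall i, M01_spec (f i)) -> I01 t0 -> (forall i, (0 <= a i <= 1)%R) -> 0 < eta ->
  (forall i, `|ratr (a i) - f i t0| <= eta) ->
  exists2 k, M01 k & approx_point_cost a f k <= n%:R * (4 * eta).
Proof.
move=> Mf It0 a01 eta0 fa; have /andP[t00 t01] := It0.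
have [del del0 Hdel] := @finite_common_delta _ (fun i d => forall s, I01 s ->
    `|t0 - s| < d -> `|f i t0 - f i s| < eta)
  (fun i d d' _ dd H s Is ts => H s Is (lt_le_trans ts dd))
  (fun i => M01_cont (Mf i) It0 eta0).
pose w := Num.min (del / 2) 1.
have [w0 w1 wdel] : [/\ 0 < w, w <= 1 & w < del].
  by rewrite /w lt_min ltr01 divr_gt0 // ge_min lexx orbT; split => //; rewrite gt_min; lra.
pose c := if t0 - w <= 0 then 0 else t0 - w.
have [c0 ct0 t0c cw1] : [/\ 0 <= c, c <= t0, t0 <= c + w & c + w <= 1].
  by rewrite /c; case: ifP => ?; split; lra.
have cw : c <= c + w by lra.
have Mk := ramp_M01 c0 w0 cw1.
have near_t0 i s : c <= s <= c + w -> `|f i s - f i t0| < eta.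
  move=> /andP[? ?]; rewrite distrC; apply: Hdel; first by apply/andP; split; lra.
  by rewrite ltr_norml; apply/andP; split; lra.
exists (ramp c w); first exact/inMP.
have -> : n%:R * (4 * eta) = \sum_(i < n) (eta + eta) + \sum_(i < n) (eta + eta).
  by rewrite sumr_const card_ord -mulr_natl; lra.
apply: lerD; apply: ler_sum => i _.
- have [t ct ->] := phi1_ramp (Mf i) Mk c0 cw cw1 (ramp_le w0 (lexx c)) (ramp_end c w0).
  have := near_t0 i t ct; have := fa i.
  by rewrite ler_norml ltr_norml ler_norml => /andP[? ?] /andP[? ?]; apply/andP; split; lra.
- apply: le_trans (phi_gap_le (Mf i) Mk (a01 i) _ (fun s _ sc => ramp_le w0 sc)) _.
    by apply/andP; split; lra.
  have := near_t0 i c; rewrite lexx cw => /(_ isT).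
  by have := fa i; rewrite ge_max ler_norml ltr_norml => /andP[? ?] /andP[? ?]; lra.
Qed.

Lemma phi_gap_point a g k eps s : M01_spec g -> M01_spec k -> (0 <= a <= 1)%R ->
  I01 s -> k s = eps -> `|phi 1 g k - ratr a| < eps -> ratr a - phi a g k < eps ->
  `|g s - ratr a| < eps + eps.
Proof.
move=> Mg Mk a01 Is ks.
have [t It gkt] := phi_witness Mg Mk (@I01_1 rat).
have [u Iu gku] := phi_witness Mg Mk a01.
rewrite (phiE Mg Mk _ It gkt) // (phiE Mg Mk a01 Iu gku); rewrite rmorph1 in gkt.
rewrite !ltr_norml => /andP[? ?] ?.
have /andP[? ?] := M01_range Mg Is.
have us : u <= s.
  by rewrite leNgt; apply/negP => /ltW su; have := M01_mono Mk Is Iu su; lra.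
have := M01_mono Mg Iu Is us => ?; apply/andP; split; first lra.
have [ekt|kte] := ltrP eps (k t); last lra.
have st : s <= t.
  by rewrite leNgt; apply/negP => /ltW ts; have := M01_mono Mk It Is ts; lra.
by have := M01_mono Mg Is It st; lra.
Qed.

Lemma phi_gap_ge0 a g k : M01_spec g -> M01_spec k -> (0 <= a <= 1)%R ->
  0 <= ratr a - phi a g k.
Proof.
move=> Mg Mk a01; have [u Iu gku] := phi_witness Mg Mk a01.
rewrite (phiE Mg Mk a01 Iu gku) -gku addrAC subrr add0r.
by have /andP[] := M01_range Mk Iu.
Qed.

Lemma approx_point_cost_ge0 n (g : 'I_n -> RR -> RR) (a : 'I_n -> rat) k :
  (forall i, M01_spec (g i)) -> (forall i, (0 <= a i <= 1)%R) -> M01_spec k ->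
  0 <= approx_point_cost a g k.
Proof.
move=> Mg a01 Mk; apply: addr_ge0; apply: sumr_ge0 => i _ //.
exact: phi_gap_ge0.
Qed.

Lemma approx_point_cost_lt n (g : 'I_n -> RR -> RR) (a : 'I_n -> rat) k eps :
  (forall i, M01_spec (g i)) -> (forall i, (0 <= a i <= 1)%R) -> M01_spec k ->
  0 < eps -> eps <= 1 -> approx_point_cost a g k < eps ->
  exists2 s, I01 s & forall i, `|g i s - ratr (a i)| < eps + eps.
Proof.
move=> Mg a01 Mk e0 e1 cost.
have gap_ge0 i := phi_gap_ge0 (Mg i) Mk (a01 i).
have term_le (F : 'I_n -> RR) i : (forall j, 0 <= F j) -> F i <= \sum_j F j.
  by move=> F0; rewrite (bigD1 i) //= lerDl sumr_ge0.
have S1 : 0 <= \sum_i `|phi 1 (g i) k - ratr (a i)| by exact: sumr_ge0.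
have S2 : 0 <= \sum_i (ratr (a i) - phi (a i) (g i) k) by exact: sumr_ge0.
have [|s /andP[s0 s1] ks] := ivt01 (v := eps) (M01_cont Mk) (lexx 0) ler01 (lexx 1).
  by rewrite (M01_0 Mk) (M01_1 Mk) e1 ltW.
exists s => [|i]; first by rewrite s0.
apply: phi_gap_point (Mg i) Mk (a01 i) _ ks _ _; first by rewrite s0.
- have /= := term_le _ i (fun j => normr_ge0 (phi 1 (g j) k - ratr (a j))).
  by move: cost; rewrite /approx_point_cost; lra.
- have /= := term_le _ i gap_ge0.
  by move: cost; rewrite /approx_point_cost; lra.
Qed.

Lemma row_image_compact n (g : 'I_n -> RR -> RR) : (forall i, cont01 (g i)) ->
  compact [set \row_i g i t | t in `[0, 1]].
Proof.
move=> cg; apply: continuous_compact; last exact: segment_compact.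
apply/subspace_continuousP => x Ix B /nbhs_ballP[e e0 He].
have [d d0 Hd] := @finite_common_delta _ (fun i d => forall y, I01 y ->
    `|x - y| < d -> `|g i x - g i y| < e)
  (fun i d d' _ dd H y Iy xy => H y Iy (lt_le_trans xy dd))
  (fun i => cg i x Ix e e0).
rewrite /within /=; apply/nbhs_ballP; exists d => // y xy Iy.
by apply/He/row_ballP; split => // j; rewrite !mxE; apply: Hd.
Qed.

Lemma approx_image_point n (g : 'I_n -> RR -> RR) (p : 'I_n -> RR) :
  (forall i, cont01 (g i)) ->
  (forall e, 0 < e -> exists2 s, I01 s & forall i, `|g i s - p i| < e) ->
  exists2 s, I01 s & forall i, g i s = p i.
Proof.
move=> cg approx; set K := [set \row_i g i t | t in `[0, 1]].
have : closure K (\row_i p i).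
  move=> B /nbhs_ballP[e e0 He]; have [s Is gp] := approx e e0.
  exists (\row_i g i s); split; first by exists s.
  by apply/He/row_ballP; split => // j; rewrite !mxE distrC.
rewrite -(closure_id _).1; last first.
  by apply: compact_closed; [exact: norm_hausdorff|exact: row_image_compact].
case=> s Is /rowP gp; exists s => // i.
by have := gp i; rewrite !mxE.
Qed.

Lemma rat_approx01 (x eta : RR) : I01 x -> 0 < eta ->
  exists2 q : rat, (0 <= q <= 1)%R & `|ratr q - x| <= eta.
Proof.
move=> /andP[x0 x1] e0.
have [|q] := @rat_in_itvoo _ (Num.max 0 (x - eta)) (Num.min 1 (x + eta)).
  by rewrite lt_min !gt_max; apply/andP; split; apply/andP; split; lra.
rewrite in_itv /= gt_max lt_min => /andP[/andP[q0 qx] /andP[q1 xq]].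
exists q; last by rewrite ler_norml; apply/andP; split; lra.
by apply/andP; split; rewrite -(ler_rat RR) ?rmorph0 ?rmorph1; lra.
Qed.

Lemma inf_lt_witness (E : set RR) x : E !=set0 -> has_lbound E -> inf E < x ->
  exists2 y, E y & y < x.
Proof.
move=> E0 lE; rewrite -subr_gt0 => /inf_adherent/(_ (conj E0 lE))[y Ey yx].
by exists y => //; lra.
Qed.

Lemma same_type_approx_point n (f g : 'I_n -> RR -> RR) t0 :
  (forall i, M01_spec (f i)) -> (forall i, M01_spec (g i)) -> same_type f g -> I01 t0 ->
  forall e, 0 < e -> exists2 s, I01 s & forall i, `|g i s - f i t0| < e.
Proof.
move=> Mf Mg ST It0 e e0.
pose m := Num.min e 1; pose eps := m / 3; pose eta := eps / (4 * n%:R + 2).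
have [m0 me m1] : [/\ 0 < m, m <= e & m <= 1].
  by rewrite /m lt_min e0 ltr01 !ge_min !lexx ?orbT.
have [eps0 eps1 epse] : [/\ 0 < eps, eps <= 1 & 3 * eps <= e] by rewrite /eps; split; lra.
have N0 : 0 < 4 * n%:R + 2 :> RR by rewrite ltr_wpDl ?mulr_ge0 ?ler0n.
have eta0 : 0 < eta by rewrite divr_gt0.
have cost_eta : n%:R * (4 * eta) + eta < eps.
  have etaE : eta * (4 * n%:R + 2) = eps by rewrite /eta divfK // lt0r_neq0.
  lra.
have eta_eps : eta < eps.
  by apply: le_lt_trans cost_eta; rewrite lerDr mulr_ge0 // mulr_ge0 // ltW.
have [a a01 fa] := fin_all_exists2 (fun i => rat_approx01 (M01_range (Mf i) It0) eta0).
have [k Mk cost_f] := approx_point_cost_le Mf It0 a01 eta0 fa.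
have cost_lb h : (forall i, M01_spec (h i)) ->
    has_lbound [set approx_point_cost a h l | l in M01].
  by move=> Mh; exists 0 => _ [l /inMP Ml <-]; exact: approx_point_cost_ge0.
have inf_g : inf [set approx_point_cost a g l | l in M01] < eps.
  rewrite -eval_approx_point_formula -ST ?eval_approx_point_formula; last first.
  - exact: approx_point_formula_free.
  - exact: approx_point_formula_wf.
  apply: le_lt_trans cost_eta; rewrite -[leLHS]addr0; apply: lerD (ltW eta0).
  by apply: le_trans cost_f; apply: (ge_inf (cost_lb f Mf)); exists k.
have [_ [k' /inMP Mk' <-] cost_g] := inf_lt_witness
  (image_nonempty _ M01_nonempty) (cost_lb g Mg) inf_g.
have [s Is ga] := approx_point_cost_lt Mg a01 Mk' eps0 eps1 cost_g.
exists s => // i; have := ga i; have := fa i.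
by rewrite !ler_norml !ltr_norml => /andP[? ?] /andP[? ?]; apply/andP; split; lra.
Qed.

Lemma same_type_im_sub n (f g : 'I_n -> RR -> RR) :
  (forall i, inM (f i)) -> (forall i, inM (g i)) -> same_type f g -> im f `<=` im g.
Proof.
move=> Mf Mg ST _ [t0 It0 <-]; rewrite itv01E in It0.
have {}Mf i : M01_spec (f i) by apply/inMP.
have {}Mg i : M01_spec (g i) by apply/inMP.
have [|s Is gf] := approx_image_point (p := fun i => f i t0) (fun i => M01_cont (Mg i)).
  exact: same_type_approx_point.
by exists s; [rewrite itv01E|apply/funext => i; exact: gf].
Qed.

Unset Implicit Arguments.

Theorem mainTheorem14 (n : nat) (f g : 'I_n -> RR -> RR) :
  (forall i, inM (f i)) -> (forall i, inM (g i)) ->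
  (same_type f g <-> im f = im g).
Proof.
move=> Mf Mg; split; last exact: same_image_same_type.
move=> ST; apply/seteqP; split; first exact: same_type_im_sub.
by apply: same_type_im_sub => // p wp fv; symmetry; exact: ST.
Qed.
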